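(* Let $\rho$ be a left-c.e. semi-measure. If $X\in2^\omega$ is computable and $X\in\mathsf{W2R}_\rho$, then $\inf_n\rho(X{\upharpoonright}n)>0$.
   Context: $2^{<\omega}$ is the set of finite binary strings, $\varepsilon$ the empty string, $X{\upharpoonright}n$ the first $n$ bits of $X$, $[\![\sigma]\!]=\{X\in2^\omega:\sigma\preceq X\}$, $[\![S]\!]=\bigcup_{\sigma\in S}[\![\sigma]\!]$. A semi-measure is $\rho:2^{<\omega}\to[0,1]$ with $\rho(\varepsilon)=1$ and $\rho(\sigma)\ge\rho(\sigma0)+\rho(\sigma1)$; left-c.e. means its values are uniformly approximable from below by computable non-decreasing rational sequences. For $E\subseteq2^{<\omega}$, $\rho(E)=\sum_{\sigma\in E}\rho(\sigma)$. $X\in\mathsf{W2R}_\rho$ iff $X\notin\bigcap_i[\![U_i]\!]$ for every uniformly c.e. sequence $(U_i)$ of subsets of $2^{<\omega}$ with $\lim_i\rho(U_i)=0$. *)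

From HB Require Import structures.
From mathcomp Require Import all_boot all_order all_algebra.
From mathcomp Require Import all_classical all_reals all_analysis.

Set Implicit Arguments.
Unset Strict Implicit.
Unset Printing Implicit Defensive.

Import Order.TTheory GRing.Theory Num.Theory.
Import numFieldNormedType.Exports.
Local Open Scope classical_set_scope.
Local Open Scope ring_scope.

(* Codes act on argument lists; [Proj i] returns the i-th argument (0 if absent). *)
Inductive prf : Type :=
| PZero : prf
| PSucc : prf
| PProj : nat -> prf
| PComp : prf -> seq prf -> prf
| PRec  : prf -> prf -> prf
| PMu   : prf -> prf.

Inductive eval : prf -> seq nat -> nat -> Prop :=
| evZero xs : eval PZero xs 0
| evSucc xs : eval PSucc xs (head 0%N xs).+1
| evProj i xs : eval (PProj i) xs (nth 0%N xs i)
| evComp f gs xs ys y : evals gs xs ys -> eval f ys y -> eval (PComp f gs) xs y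
| evRec0 f g xs y : eval f xs y -> eval (PRec f g) (0%N :: xs) y
| evRecS f g n xs y z :
    eval (PRec f g) (n :: xs) y -> eval g (n :: y :: xs) z ->
    eval (PRec f g) (n.+1 :: xs) z
| evMu f xs n :
    eval f (n :: xs) 0 ->
    (forall m, (m < n)%N -> exists k, eval f (m :: xs) k.+1) ->
    eval (PMu f) xs n
with evals : seq prf -> seq nat -> seq nat -> Prop :=
| evsNil xs : evals [::] xs [::]
| evsCons g gs xs y ys : eval g xs y -> evals gs xs ys -> evals (g :: gs) xs (y :: ys).

(* Bijective coding of finite binary strings by natural numbers. *)
Fixpoint code_str (s : seq bool) : nat :=
  match s with
  | [::] => 0%N
  | b :: s' => ((code_str s').*2 + 1 + b)%N
  end.

Definition prefixn (X : nat -> bool) (n : nat) : seq bool := mkseq X n.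

Definition cyl (s : seq bool) : set (nat -> bool) :=
  [set X | prefixn X (size s) = s].

Definition cylS (S : set (seq bool)) : set (nat -> bool) :=
  \bigcup_(s in S) cyl s.

Definition computable_seq (X : nat -> bool) : Prop :=
  exists e, forall n, eval e [:: n] (nat_of_bool (X n)).

Definition unif_ce (U : nat -> set (seq bool)) : Prop :=
  exists e, forall i s, U i s <-> exists y, eval e [:: i; code_str s] y.

Section Measures.
Variable R : realType.

Definition semi_measure (rho : seq bool -> R) : Prop :=
  [/\ forall s, 0 <= rho s <= 1,
      rho [::] = 1 &
      forall s, rho (rcons s false) + rho (rcons s true) <= rho s].

Definition left_ce (rho : seq bool -> R) : Prop :=
  exists (enu eden : prf) (num den : nat -> nat -> nat),
    (forall c s, eval enu [:: c; s] (num c s) /\ eval eden [:: c; s] (den c s)) /\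
    forall sg,
      let q := fun s : nat =>
        ratr ((num (code_str sg) s)%:Q / (den (code_str sg) s).+1%:Q) : R in
      (forall s, q s <= q s.+1) /\ q @ \oo --> rho sg.

Definition rho_set (rho : seq bool -> R) (E : set (seq bool)) : \bar R :=
  (\esum_(s in E) (rho s)%:E)%E.

Definition W2R (rho : seq bool -> R) : set (nat -> bool) :=
  [set X | forall U : nat -> set (seq bool),
      unif_ce U -> (fun i => rho_set rho (U i)) @ \oo --> 0%E ->
      ~ (\bigcap_i cylS (U i)) X].

End Measures.

(* If the nonincreasing sequence rho(X|n) had infimum 0, the singletons
   U_i = {X|i} would form a W2R_rho test capturing X: they are uniformly c.e.
   because X is computable, and rho(U_i) = rho(X|i) tends to 0.  The argument
   never looks at how rho is approximated. *)
From Pilot Require Import Defs.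
From HB Require Import structures.
From mathcomp Require Import all_boot all_order all_algebra.
From mathcomp Require Import all_classical all_reals all_analysis.
From mathcomp Require Import lra zify.
Import Order.TTheory GRing.Theory Num.Theory.
Import numFieldNormedType.Exports.
Local Open Scope classical_set_scope.
Local Open Scope ring_scope.
Notation eval := Defs.eval.
Notation evals := Defs.evals.

Section Evaluation.
Local Open Scope nat_scope.

Fixpoint prf_nested_ind (P : prf -> Prop) (H0 : P PZero) (HS : P PSucc)
  (HP : forall i, P (PProj i))
  (HC : forall f gs, P f -> foldr (fun g acc => P g /\ acc) True gs -> P (PComp f gs))
  (HR : forall f g, P f -> P g -> P (PRec f g))
  (HM : forall f, P f -> P (PMu f)) (p : prf) {struct p} : P p :=
  let IH := @prf_nested_ind P H0 HS HP HC HR HM in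
  match p with
  | PZero => H0
  | PSucc => HS
  | PProj i => HP i
  | PComp f gs => HC f gs (IH f)
      ((fix F (gs : seq prf) : foldr (fun g acc => P g /\ acc) True gs :=
          match gs return foldr (fun g acc => P g /\ acc) True gs with
          | [::] => I
          | g :: gs' => conj (IH g) (F gs')
          end) gs)
  | PRec f g => HR f g (IH f) (IH g)
  | PMu f => HM f (IH f)
  end.

Definition deterministic (p : prf) :=
  forall xs y y', eval p xs y -> eval p xs y' -> y = y'.

Lemma evals_deterministic {gs} :
  foldr (fun g acc => deterministic g /\ acc) True gs ->
  forall xs ys ys', evals gs xs ys -> evals gs xs ys' -> ys = ys'.
Proof.
elim: gs => [|g gs IH] /= Hd xs ys ys' H1 H2; first by inversion H1; inversion H2.
case: Hd => Hg Hgs; inversion H1; subst; inversion H2; subst.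
by rewrite (Hg _ _ _ H3 H4) (IH Hgs _ _ _ H6 H8).
Qed.

(* Structural induction on the code rather than on the derivation: the
   minimality premise of [evMu] carries no induction hypothesis. *)
Lemma eval_deterministic p : deterministic p.
Proof.
elim/prf_nested_ind: p.
- by move=> xs y y' H1 H2; inversion H1; inversion H2.
- by move=> xs y y' H1 H2; inversion H1; inversion H2.
- by move=> i xs y y' H1 H2; inversion H1; inversion H2.
- move=> f gs Hf Hgs xs y y' H1 H2; inversion H1; subst; inversion H2; subst.
  have E := evals_deterministic Hgs _ _ _ H3 H4; subst.
  exact: Hf _ _ _ H6 H8.
- move=> f g Hf Hg.
  have rec_det n xs y y' : eval (PRec f g) (n :: xs) y ->
      eval (PRec f g) (n :: xs) y' -> y = y'.
    elim: n xs y y' => [|n IH] xs y y' H1 H2;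
      inversion H1; subst; inversion H2; subst; first exact: Hf _ _ _ H5 H6.
    have E := IH _ _ _ H6 H8; subst; exact: Hg _ _ _ H7 H9.
  by move=> [|n xs] y y' H1 H2; [inversion H1 | exact: rec_det _ _ _ _ H1 H2].
- move=> f Hf xs y y' H1 H2; inversion H1; subst; inversion H2; subst.
  case: (ltngtP y y') => // lt_yy'.
  + by have [k /(Hf _ _ _ H0)] := H5 _ lt_yy'.
  + by have [k /(Hf _ _ _ H4)] := H3 _ lt_yy'.
Qed.

Lemma eval_proj_nth i xs v : nth 0 xs i = v -> eval (PProj i) xs v.
Proof. by move <-; apply: evProj. Qed.

Lemma eval_succ1 a : eval PSucc [:: a] a.+1.
Proof. exact: (evSucc [:: a]). Qed.

Lemma eval_comp1 f g xs a y :
  eval g xs a -> eval f [:: a] y -> eval (PComp f [:: g]) xs y.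
Proof. by move=> Hg; apply: evComp; apply: evsCons Hg (evsNil _). Qed.

Lemma eval_comp2 f g h xs a b y : eval g xs a -> eval h xs b ->
  eval f [:: a; b] y -> eval (PComp f [:: g; h]) xs y.
Proof.
by move=> Hg Hh; apply: evComp; apply: evsCons Hg _; apply: evsCons Hh (evsNil _).
Qed.

Lemma eval_rec_graph f g xs (H : nat -> nat) : eval f xs (H 0) ->
  (forall n, eval g (n :: H n :: xs) (H n.+1)) ->
  forall n, eval (PRec f g) (n :: xs) (H n).
Proof. by move=> H0 HS; elim=> [|n IH]; [exact: evRec0 | exact: evRecS IH (HS n)]. Qed.

Definition padd := PRec (PProj 0) (PComp PSucc [:: PProj 1]).

Lemma eval_padd n m : eval padd [:: n; m] (n + m).
Proof.
apply: (@eval_rec_graph _ _ _ (addn^~ m)); first exact: eval_proj_nth.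
by move=> k; apply: eval_comp1; [exact: eval_proj_nth | exact: eval_succ1].
Qed.

Definition pmul := PRec PZero (PComp padd [:: PProj 2; PProj 1]).

Lemma eval_pmul n m : eval pmul [:: n; m] (n * m).
Proof.
apply: (@eval_rec_graph _ _ _ (muln^~ m)); first exact: evZero.
move=> k; apply: eval_comp2; [exact: eval_proj_nth | exact: eval_proj_nth |].
by rewrite mulSn; apply: eval_padd.
Qed.

Definition pexp2 := PRec (PComp PSucc [:: PZero]) (PComp padd [:: PProj 1; PProj 1]).

Lemma eval_pexp2 n : eval pexp2 [:: n] (2 ^ n).
Proof.
apply: (@eval_rec_graph _ _ _ (expn 2)).
  by apply: eval_comp1; [exact: evZero | exact: eval_succ1].
move=> k; apply: eval_comp2; [exact: eval_proj_nth | exact: eval_proj_nth |].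
by rewrite expnS mul2n -addnn; apply: eval_padd.
Qed.

Definition ppred := PRec PZero (PProj 0).

Lemma eval_ppred n : eval ppred [:: n] n.-1.
Proof.
apply: (@eval_rec_graph _ _ _ predn); first exact: evZero.
by move=> k; apply: eval_proj_nth.
Qed.

(* Note the argument order: [psub] on [n; m] computes the truncated [m - n]. *)
Definition psub := PRec (PProj 0) (PComp ppred [:: PProj 1]).

Lemma eval_psub n m : eval psub [:: n; m] (m - n).
Proof.
apply: (@eval_rec_graph _ _ _ (subn m)); first by apply: eval_proj_nth; rewrite subn0.
move=> k; apply: eval_comp1; first exact: eval_proj_nth.
by rewrite subnS; apply: eval_ppred.
Qed.

End Evaluation.

Section PrefixTest.
Local Open Scope nat_scope.

Lemma code_str_rcons s b : code_str (rcons s b) = code_str s + 2 ^ size s * b.+1.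
Proof.
elim: s => [|a s IH] /=; first by rewrite expn0 mul1n; case: b.
by rewrite IH expnS -!muln2; lia.
Qed.

Lemma code_str_inj : injective code_str.
Proof.
elim=> [|a s IH] [|b t] //=; rewrite -?muln2; try lia.
move=> E; have Eab : a = b by case: a b E => [] [] /=; lia.
by subst; congr (_ :: _); apply: IH; lia.
Qed.

Lemma prefixnS X n : prefixn X n.+1 = rcons (prefixn X n) (X n).
Proof. exact: mkseqS. Qed.

Variables (X : nat -> bool) (eX : prf).
Hypothesis eval_eX : forall n, eval eX [:: n] (nat_of_bool (X n)).

Definition pcode_prefix := PRec PZero
  (PComp padd [:: PProj 1; PComp pmul [:: PComp pexp2 [:: PProj 0];
                                        PComp PSucc [:: PComp eX [:: PProj 0]]]]).

Lemma eval_pcode_prefix i xs :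
  eval pcode_prefix (i :: xs) (code_str (prefixn X i)).
Proof.
apply: (@eval_rec_graph _ _ _ (fun i => code_str (prefixn X i))); first exact: evZero.
move=> k; apply: eval_comp2; first exact: eval_proj_nth.
  apply: eval_comp2.
  - by apply: eval_comp1; [exact: eval_proj_nth | exact: eval_pexp2].
  - apply: eval_comp1; last exact: eval_succ1.
    by apply: eval_comp1; [exact: eval_proj_nth | exact: eval_eX].
  - exact: eval_pmul.
by rewrite prefixnS code_str_rcons /prefixn size_mkseq; apply: eval_padd.
Qed.

(* On arguments [n; i; c], the distance |code(X|i) - c|; the dummy [n] is the
   variable searched over by [PMu]. *)
Definition pdist_prefix :=
  PComp padd [:: PComp psub [:: PProj 2; PComp pcode_prefix [:: PProj 1]];
                 PComp psub [:: PComp pcode_prefix [:: PProj 1]; PProj 2]].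

Lemma eval_pdist_prefix n i c : eval pdist_prefix [:: n; i; c]
  ((code_str (prefixn X i) - c) + (c - code_str (prefixn X i))).
Proof.
apply: eval_comp2; last exact: eval_padd.
- apply: eval_comp2; [exact: eval_proj_nth | | exact: eval_psub].
  by apply: eval_comp1; [exact: eval_proj_nth | exact: eval_pcode_prefix].
- apply: eval_comp2; [ | exact: eval_proj_nth | exact: eval_psub].
  by apply: eval_comp1; [exact: eval_proj_nth | exact: eval_pcode_prefix].
Qed.

End PrefixTest.

Lemma unif_ce_prefixn X : computable_seq X -> unif_ce (fun i => [set prefixn X i]).
Proof.
case=> eX HX; exists (PMu (pdist_prefix eX)) => i s; split.
- move=> ->; exists 0%N; apply: evMu => //.
  by have := eval_pdist_prefix X eX HX 0 i (code_str (prefixn X i)); rewrite subnn.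
- case=> y Hy; inversion Hy; subst.
  have := eval_deterministic _ _ _ _ H0 (eval_pdist_prefix X eX HX y i (code_str s)).
  by move=> dist0; apply: code_str_inj; lia.
Qed.

Section SemiMeasure.
Variables (R : realType) (rho : seq bool -> R).
Hypothesis rho_sm : semi_measure rho.

Lemma semi_measure_ge0 s : 0 <= rho s.
Proof. by case: rho_sm => /(_ s) /andP[]. Qed.

Lemma semi_measure_rcons_le s b : rho (rcons s b) <= rho s.
Proof.
case: rho_sm => _ _ /(_ s) split_le.
have := semi_measure_ge0 (rcons s false); have := semi_measure_ge0 (rcons s true).
by case: b; lra.
Qed.

Lemma semi_measure_prefixn_nonincreasing X :
  nonincreasing_seq (fun n => rho (prefixn X n)).
Proof. by apply/nonincreasing_seqP => n; rewrite prefixnS semi_measure_rcons_le. Qed.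

Lemma rho_set_set1 s : rho_set rho [set s] = (rho s)%:E.
Proof. by rewrite /rho_set esum_set1 // lee_fin semi_measure_ge0. Qed.

Lemma W2R_prefixn_not_null X : computable_seq X -> W2R rho X ->
  ~ (fun n => rho (prefixn X n)) @ \oo --> 0.
Proof.
move=> Xc XW2R rho_X0; apply: (XW2R (fun i => [set prefixn X i])).
- exact: unif_ce_prefixn.
- under eq_fun do rewrite rho_set_set1.
  by apply: cvg_EFin => //; near=> n.
- by move=> i _; exists (prefixn X i) => //; rewrite /cyl /= /prefixn size_mkseq.
Unshelve. all: by end_near.
Qed.

End SemiMeasure.

Lemma nonincreasing_inf_gt0 (R : realType) (u : R ^nat) :
  nonincreasing_seq u -> (forall n, 0 <= u n) -> ~ u @ \oo --> 0 ->
  0 < inf (range u).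
Proof.
move=> u_noninc u_ge0 u_not0.
have inf_ge0 : 0 <= inf (range u).
  by apply: lb_le_inf; [exists (u 0%N), 0%N | move=> _ [n _ <-]].
rewrite lt_neqAle inf_ge0 andbT; apply/negP => /eqP inf0.
apply: u_not0; rewrite inf0.
by apply: nonincreasing_cvgn => //; exists 0 => _ [n _ <-].
Qed.

Theorem proposition5p10 (R : realType) (rho : seq bool -> R)
    (Hsm : semi_measure rho) (Hlce : left_ce rho)
    (X : nat -> bool) (HXc : computable_seq X) (HXw : W2R rho X) :
  0 < inf (range (fun n => rho (prefixn X n))).
Proof.
apply: nonincreasing_inf_gt0.
- exact: semi_measure_prefixn_nonincreasing.
- by move=> n; apply: semi_measure_ge0.
- exact: W2R_prefixn_not_null.
Qed.
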